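(* In every Choi-defined resource theory, for every system $A$ the maximally mixed state $\frac{1}{d_A}\mathbb{1}_A$ is a free state.
   Context: A quantum resource theory specifies, for all finite-dimensional systems, a set of free channels containing the identity, swap and discarding (partial trace) channels and closed under sequential and parallel composition; free states are those preparable by free channels, and the family of free states is closed under tensor product, partial trace and system swaps. For a channel $\mathcal{M}_{A\to B}$ its renormalized Choi matrix is $\frac{1}{d_A}(\mathcal{M}_{A\to B}\otimes\mathcal{I}_{A'})(\Phi_{AA'})$, where $A'$ is a copy of $A$, $d_A=\dim A$ and $\Phi_{AA'}=\sum_{x,y}|x\rangle\langle y|_A\otimes|x\rangle\langle y|_{A'}$ for a fixed orthonormal basis. A Choi-defined resource theory (CDRT) is a resource theory in which a channel is free if and only if its renormalized Choi matrix is a free state. *)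

From HB Require Import structures.
From mathcomp Require Import all_boot all_order all_algebra.
Set Implicit Arguments. Unset Strict Implicit. Unset Printing Implicit Defensive.
Import Order.TTheory GRing.Theory Num.Theory.
Local Open Scope ring_scope.

Section Quantum.
Variable C : numClosedFieldType.

(* A system is identified with its (positive) dimension; the composite system
   AB of dimensions m, n has dimension m * n, with basis |i>|k> indexed by
   mxvec_index i k. *)

Definition tens m1 n1 m2 n2 (A : 'M[C]_(m1, n1)) (B : 'M[C]_(m2, n2))
  : 'M[C]_(m1 * m2, n1 * n2) :=
  \sum_(i < m1) \sum_(j < n1) \sum_(k < m2) \sum_(l < n2)
     (A i j * B k l) *: delta_mx (mxvec_index i k) (mxvec_index j l).

Definition psd n (X : 'M[C]_n) : Prop :=
  forall v : 'cV[C]_n, 0 <= ((map_mx Num.conj v)^T *m X *m v) 0 0.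

Definition is_state n (X : 'M[C]_n) : Prop := psd X /\ \tr X = 1.

Definition tensmap m1 n1 m2 n2 (f : 'M[C]_m1 -> 'M[C]_n1)
  (g : 'M[C]_m2 -> 'M[C]_n2) (X : 'M[C]_(m1 * m2)) : 'M[C]_(n1 * n2) :=
  \sum_(i < m1) \sum_(j < m1) \sum_(k < m2) \sum_(l < m2)
     X (mxvec_index i k) (mxvec_index j l) *:
       tens (f (delta_mx i j)) (g (delta_mx k l)).

Definition is_channel m n (f : 'M[C]_m -> 'M[C]_n) : Prop :=
  [/\ (forall (a : C) (X Y : 'M[C]_m), f (a *: X + Y) = a *: f X + f Y),
      (forall k (X : 'M[C]_(m * k)),
          psd X -> psd (tensmap f (fun Y : 'M[C]_k => Y) X))
    & (forall X : 'M[C]_m, \tr (f X) = \tr X)].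

Definition swapch m n (X : 'M[C]_(m * n)) : 'M[C]_(n * m) :=
  \sum_(i < m) \sum_(j < m) \sum_(k < n) \sum_(l < n)
     X (mxvec_index i k) (mxvec_index j l) *:
       delta_mx (mxvec_index k i) (mxvec_index l j).

Definition ptrace2 m n (X : 'M[C]_(m * n)) : 'M[C]_m :=
  \matrix_(i, j) \sum_(k < n) X (mxvec_index i k) (mxvec_index j k).
Definition ptrace1 m n (X : 'M[C]_(m * n)) : 'M[C]_n :=
  \matrix_(k, l) \sum_(i < m) X (mxvec_index i k) (mxvec_index i l).

(* renormalized Choi matrix (1/d_A) (M ⊗ I_{A'})(Φ_{AA'}) on B ⊗ A' *)
Definition choi m n (f : 'M[C]_m -> 'M[C]_n) : 'M[C]_(n * m) :=
  (m%:R)^-1 *: \sum_(x < m) \sum_(y < m) tens (f (delta_mx x y)) (delta_mx x y).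

Section RT.
Variable free : forall m n, ('M[C]_m -> 'M[C]_n) -> Prop.

Definition free_state_of n (rho : 'M[C]_n) : Prop :=
  exists f : 'M[C]_1 -> 'M[C]_n, free f /\ rho = f 1%:M.
End RT.

Record resource_theory := ResourceTheory {
  free : forall m n, ('M[C]_m -> 'M[C]_n) -> Prop;
  free_is_channel : forall m n (f : 'M[C]_m -> 'M[C]_n),
      (0 < m)%N -> (0 < n)%N -> free f -> is_channel f;
  free_id : forall m, (0 < m)%N -> free (fun X : 'M[C]_m => X);
  free_swap : forall m n, (0 < m)%N -> (0 < n)%N -> free (@swapch m n);
  free_ptrace2 : forall m n, (0 < m)%N -> (0 < n)%N -> free (@ptrace2 m n);
  free_ptrace1 : forall m n, (0 < m)%N -> (0 < n)%N -> free (@ptrace1 m n);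
  free_comp : forall m n p (f : 'M[C]_m -> 'M[C]_n) (g : 'M[C]_n -> 'M[C]_p),
      (0 < m)%N -> (0 < n)%N -> (0 < p)%N -> free f -> free g -> free (fun X => g (f X));
  free_tens : forall m1 n1 m2 n2 (f : 'M[C]_m1 -> 'M[C]_n1)
      (g : 'M[C]_m2 -> 'M[C]_n2),
      (0 < m1)%N -> (0 < n1)%N -> (0 < m2)%N -> (0 < n2)%N ->
      free f -> free g -> free (tensmap f g);
  free_state_tens : forall m n (rho : 'M[C]_m) (sigma : 'M[C]_n),
      (0 < m)%N -> (0 < n)%N -> free_state_of free rho -> free_state_of free sigma ->
      free_state_of free (tens rho sigma);
  free_state_ptrace2 : forall m n (rho : 'M[C]_(m * n)), (0 < m)%N -> (0 < n)%N ->
      free_state_of free rho -> free_state_of free (ptrace2 rho);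
  free_state_ptrace1 : forall m n (rho : 'M[C]_(m * n)), (0 < m)%N -> (0 < n)%N ->
      free_state_of free rho -> free_state_of free (ptrace1 rho);
  free_state_swap : forall m n (rho : 'M[C]_(m * n)), (0 < m)%N -> (0 < n)%N ->
      free_state_of free rho -> free_state_of free (swapch rho)
}.

Definition free_state (RT : resource_theory) n (rho : 'M[C]_n) : Prop :=
  free_state_of (free RT) rho.

Definition is_CDRT (RT : resource_theory) : Prop :=
  forall m n (f : 'M[C]_m -> 'M[C]_n), (0 < m)%N -> (0 < n)%N -> is_channel f ->
    (free RT f <-> free_state RT (choi f)).

End Quantum.

(* The identity channel is free, so in a CDRT its renormalized Choi
   matrix, the maximally entangled state (1/d) Φ_{AA'}, is a free state.
   Discarding A' is free on states, and tracing out A' from (1/d) Φ_{AA'}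
   leaves (1/d) 1_A. *)
From HB Require Import structures.
From mathcomp Require Import all_boot all_order all_algebra.
Set Implicit Arguments. Unset Strict Implicit. Unset Printing Implicit Defensive.
Import Order.TTheory GRing.Theory Num.Theory.
Local Open Scope ring_scope.

Lemma mxvec_index_eq m n (i i' : 'I_m) (k k' : 'I_n) :
  (mxvec_index i k == mxvec_index i' k') = (i == i') && (k == k').
Proof.
apply/eqP/andP => [|[/eqP-> /eqP->] //].
by rewrite /mxvec_index => /cast_ord_inj/enum_rank_inj [-> ->].
Qed.

Section DeltaMatrices.
Variable R : pzSemiRingType.

Lemma delta_mx_mxvec_index m1 n1 m2 n2 (i i' : 'I_m1) (j j' : 'I_n1)
    (k k' : 'I_m2) (l l' : 'I_n2) :
  delta_mx (mxvec_index i' k') (mxvec_index j' l') (mxvec_index i k)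
      (mxvec_index j l) =
    delta_mx i' j' i j * delta_mx k' l' k l :> R.
Proof. by rewrite !mxE !mxvec_index_eq -natrM mulnb andbACA. Qed.

Lemma sum_delta_mx_entry m n (A : 'M[R]_(m, n)) i j :
  \sum_(i' < m) \sum_(j' < n) A i' j' * delta_mx i' j' i j = A i j.
Proof.
rewrite [in RHS](matrix_sum_delta A) summxE.
by apply: eq_bigr => i' _; rewrite summxE; apply: eq_bigr => j' _; rewrite !mxE.
Qed.

Lemma mxtrace_delta_mx n (x y : 'I_n) : \tr (delta_mx x y : 'M[R]_n) = (x == y)%:R.
Proof.
rewrite /mxtrace (bigD1 x) //= mxE eqxx big1 ?addr0 // => k /negbTE kx.
by rewrite mxE kx.
Qed.

End DeltaMatrices.

Section PartialTrace.
Variable C : numClosedFieldType.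

Lemma tensE m1 n1 m2 n2 (A : 'M[C]_(m1, n1)) (B : 'M[C]_(m2, n2)) i j k l :
  tens A B (mxvec_index i k) (mxvec_index j l) = A i j * B k l.
Proof.
rewrite -[A i j]sum_delta_mx_entry -[B k l]sum_delta_mx_entry /tens summxE.
rewrite mulr_suml; apply: eq_bigr => i' _; rewrite summxE mulr_suml.
apply: eq_bigr => j' _; rewrite summxE mulr_sumr; apply: eq_bigr => k' _.
rewrite summxE mulr_sumr; apply: eq_bigr => l' _.
by rewrite mxE delta_mx_mxvec_index mulrACA.
Qed.

Lemma ptrace2_is_linear m n : linear (@ptrace2 C m n).
Proof.
move=> a X Y; apply/matrixP => i j; rewrite !mxE mulr_sumr -big_split /=.
by apply: eq_bigr => k _; rewrite !mxE.
Qed.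

HB.instance Definition _ m n :=
  GRing.isLinear.Build C 'M[C]_(m * n) 'M[C]_m *:%R (@ptrace2 C m n)
    (@ptrace2_is_linear m n).

Lemma ptrace2_tens m n (A : 'M[C]_m) (B : 'M[C]_n) :
  ptrace2 (tens A B) = \tr B *: A.
Proof.
apply/matrixP => i j; rewrite !mxE mulrC /mxtrace mulr_sumr.
by apply: eq_bigr => k _; rewrite tensE mulrC.
Qed.

Lemma ptrace2_choi m n (f : 'M[C]_m -> 'M[C]_n) :
  ptrace2 (choi f) = (m%:R)^-1 *: \sum_(x < m) f (delta_mx x x).
Proof.
rewrite /choi linearZ linear_sum /=; congr (_ *: _).
apply: eq_bigr => x _; rewrite linear_sum (bigD1 x) //= big1 ?addr0.
  by rewrite ptrace2_tens mxtrace_delta_mx eqxx scale1r.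
by move=> y /negbTE yx; rewrite ptrace2_tens mxtrace_delta_mx eq_sym yx scale0r.
Qed.

End PartialTrace.

Theorem corollary1 (C : numClosedFieldType) (RT : resource_theory C) :
  is_CDRT RT ->
  forall n : nat, (0 < n)%N -> free_state RT ((n%:R)^-1 *: (1%:M : 'M[C]_n)).
Proof.
move=> cdrt n n_gt0.
have free_idn := free_id RT n_gt0.
have channel_idn := free_is_channel n_gt0 n_gt0 free_idn.
have free_choi := (cdrt _ _ _ n_gt0 n_gt0 channel_idn).1 free_idn.
have := free_state_ptrace2 n_gt0 n_gt0 free_choi.
by rewrite ptrace2_choi -mx1_sum_delta.
Qed.
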